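(* Let $p\ge2$, $\mathcal K>0$, let $a\colon\mathbb{R}^{Nn}\to\mathbb{R}^{Nn}$ be $C^1$ and let $\omega\colon[0,\infty)\to[0,\infty)$ be bounded with $\lim_{s\to\infty}\omega(s)=0$ and $|Da(\xi)-Db(\xi)|\le\omega(|\xi|)(1+|\xi|)^{p-2}$ for all $\xi$, where $b(\xi)=\mathcal K|\xi|^{p-2}\xi$. Let $\beta\in(0,1)$, $\rho\in(0,1]$, $B=B^+_\rho(x_o)$, and let $\Psi\in C^{0;\beta}(B,\mathbb{R}^{n\times n})$, $G\in C^{0;\beta}(B,\mathbb{R}^{Nn})$. Then for every $x\in B$ and all $\xi,\xi_o,\zeta\in\mathbb{R}^{Nn}$, $$\big|\langle a((\xi+G(x))\Psi(x)),\zeta\Psi(x)\rangle-\langle a((\xi_o+G(x_o))\Psi(x_o)),\zeta\Psi(x_o)\rangle\big|\le c\Big[\big(1+|\xi_o|^2+|\xi-\xi_o|^2\big)^{\frac{p-2}2}|\xi-\xi_o|+\rho^\beta(1+|\xi_o|)^{p-1}\Big]|\zeta|$$ with $c$ depending on $p,\mathcal K,|a(0)|,\|\omega\|_\infty,\|\Psi\|_{C^{0;\beta}(B)},\|G\|_{C^{0;\beta}(B)}$.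
   Context: $B^+_\rho(x_o)=B_\rho(x_o)\cap\{x_n>0\}$ (no requirement $(x_o)_n=0$). $\|v\|_{C^{0;\beta}(B)}=\sup_B|v|+\sup_{x\ne y\in B}\frac{|v(x)-v(y)|}{|x-y|^\beta}$. *)

From HB Require Import structures.
From mathcomp Require Import all_boot all_order all_algebra.
From mathcomp Require Import all_classical all_reals all_analysis.
Set Implicit Arguments. Unset Strict Implicit. Unset Printing Implicit Defensive.
Import Order.TTheory GRing.Theory Num.Theory.
Import numFieldNormedType.Exports.
Local Open Scope ring_scope.

(* Euclidean (Frobenius) norm on m x k real matrices; row vectors 'rV_n are
   points of R^n, so fnorm (x - y) is the Euclidean distance in R^n. *)
Definition fnorm (R : realType) (m k : nat) (A : 'M[R]_(m, k)) : R :=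
  Num.sqrt (\sum_(i < m) \sum_(j < k) A i j ^+ 2).

Definition mxdot (R : realType) (m k : nat) (A B : 'M[R]_(m, k)) : R :=
  \sum_(i < m) \sum_(j < k) A i j * B i j.

(* last coordinate x_n of x in R^n (0 when n = 0). *)
Definition lastc (R : realType) (n : nat) (x : 'rV[R]_n) : R :=
  \sum_(i < n | (i : nat) == n.-1) x 0 i.

Definition halfball (R : realType) (n : nat) (xo : 'rV[R]_n) (rho : R)
  (x : 'rV[R]_n) : Prop :=
  fnorm (x - xo) < rho /\ 0 < lastc x.

(* its closure {|x - xo| <= rho, x_n >= 0} (valid when (xo)_n >= 0, rho > 0) *)
Definition halfball_cl (R : realType) (n : nat) (xo : 'rV[R]_n) (rho : R)
  (x : 'rV[R]_n) : Prop :=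
  fnorm (x - xo) <= rho /\ 0 <= lastc x.

(* "v belongs to C^{0;beta}(S) and ||v||_{C^{0;beta}(S)} <= P", where
   ||v|| = sup_S |v| + sup_{x<>y in S} |v x - v y| / |x - y|^beta. *)
Definition holder_le (R : realType) (n m k : nat) (beta : R)
  (S : 'rV[R]_n -> Prop) (v : 'rV[R]_n -> 'M[R]_(m, k)) (P : R) : Prop :=
  exists M0 M1 : R, M0 + M1 <= P /\
    (forall x, S x -> fnorm (v x) <= M0) /\
    (forall x y, S x -> S y -> x != y ->
       fnorm (v x - v y) <= M1 * fnorm (x - y) `^ beta).

Definition bmap (R : realType) (N n : nat) (K p : R) (xi : 'M[R]_(N, n))
  : 'M[R]_(N, n) := (K * fnorm xi `^ (p - 2)) *: xi.

From HB Require Import structures.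
From mathcomp Require Import all_boot all_order all_algebra.
From mathcomp Require Import all_classical all_reals all_analysis.
From mathcomp Require Import ring lra.
Import Order.TTheory GRing.Theory Num.Theory.
Import numFieldNormedType.Exports.
Local Open Scope ring_scope.
Local Open Scope classical_set_scope.

(* Write e = (xi + G x) Psi x and eo = (xio + G xo) Psi xo. Since Da is within
   omega(|eta|) (1 + |eta|)^(p-2) of Db and |Db(eta)| <= K (p - 1) |eta|^(p-2),
   we get |Da(eta)| <= C (1 + |eta|)^(p-2), at eta = 0 by continuity of Da.
   The mean value theorem along segments then bounds <a(e) - a(eo), zeta Psi x>
   by C (1 + |eo| + |e - eo|)^(p-2) |e - eo| |zeta|, and the growth of a bounds
   <a(eo), zeta (Psi x - Psi xo)>. The Hölder bounds give |eo| <~ 1 + |xio| and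
   |e - eo| <~ |xi - xio| + (1 + |xio|) rho^beta; comparing |xi - xio| with
   1 + |xio| finally splits (1 + |xio| + |xi - xio|)^(p-2) times the latter into
   the two terms of the claim. *)

Section SumOfSquares.
Context {R : realType} {I : finType}.
Implicit Types x y : I -> R.

Lemma sum_sqr_ge0 x : 0 <= \sum_i x i ^+ 2.
Proof. by apply: sumr_ge0 => i _; rewrite sqr_ge0. Qed.

Lemma sqr_sum_mul_le x y :
  (\sum_i x i * y i) ^+ 2 <= (\sum_i x i ^+ 2) * (\sum_i y i ^+ 2).
Proof.
set a := \sum_i x i ^+ 2; set b := \sum_i y i ^+ 2; set c := \sum_i x i * y i.
have [b0|b_gt0] := eqVneq b 0.
  have y0 i : y i = 0.
    apply/eqP; rewrite -sqrf_eq0; apply/eqP.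
    by move/psumr_eq0P: b0; apply => // j _; rewrite sqr_ge0.
  by rewrite /c big1 ?expr0n ?b0 ?mulr0 // => i _; rewrite y0 mulr0.
have {b_gt0}b_gt0 : 0 < b by rewrite lt_def b_gt0 sum_sqr_ge0.
have lagrange : \sum_i (b * x i - c * y i) ^+ 2 = b * (a * b - c ^+ 2).
  rewrite (eq_bigr (fun i => b ^+ 2 * x i ^+ 2 - 2 * b * c * (x i * y i)
      + c ^+ 2 * y i ^+ 2)); last by move=> i _; ring.
  rewrite !big_split /= sumrN -!mulr_sumr -/a -/b -/c; ring.
have : 0 <= b * (a * b - c ^+ 2) by rewrite -lagrange sum_sqr_ge0.
by rewrite pmulr_rge0 // subr_ge0.
Qed.

Lemma norm_sum_mul_le x y :
  `|\sum_i x i * y i| <= Num.sqrt (\sum_i x i ^+ 2) * Num.sqrt (\sum_i y i ^+ 2).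
Proof.
by rewrite -sqrtrM ?sum_sqr_ge0 // -sqrtr_sqr ler_wsqrtr // sqr_sum_mul_le.
Qed.

Lemma sqrt_sum_sqrD x y :
  Num.sqrt (\sum_i (x i + y i) ^+ 2) <=
  Num.sqrt (\sum_i x i ^+ 2) + Num.sqrt (\sum_i y i ^+ 2).
Proof.
set a := \sum_i x i ^+ 2; set b := \sum_i y i ^+ 2.
have a0 : 0 <= a := sum_sqr_ge0 x.
have b0 : 0 <= b := sum_sqr_ge0 y.
have -> : \sum_i (x i + y i) ^+ 2 = a + 2 * (\sum_i x i * y i) + b.
  rewrite (eq_bigr (fun i => x i ^+ 2 + 2 * (x i * y i) + y i ^+ 2)).
    by rewrite !big_split /= -mulr_sumr.
  by move=> i _; ring.
rewrite -[X in _ <= X]ger0_norm ?addr_ge0 ?sqrtr_ge0 // -sqrtr_sqr ler_wsqrtr //.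
have := le_trans (ler_norm _) (norm_sum_mul_le x y); rewrite -/a -/b.
by rewrite sqrrD !sqr_sqrtr //; nra.
Qed.

End SumOfSquares.

Section FrobeniusNorm.
Context {R : realType} {m k : nat}.
Implicit Types A B C : 'M[R]_(m, k).

Lemma fnormE A : fnorm A = Num.sqrt (\sum_(q : 'I_m * 'I_k) A q.1 q.2 ^+ 2).
Proof. by rewrite /fnorm pair_big. Qed.

Lemma mxdotE A B : mxdot A B = \sum_(q : 'I_m * 'I_k) A q.1 q.2 * B q.1 q.2.
Proof. by rewrite /mxdot pair_big. Qed.

Lemma fnorm_ge0 A : 0 <= fnorm A.
Proof. exact: sqrtr_ge0. Qed.

Lemma mxdot_le A B : `|mxdot A B| <= fnorm A * fnorm B.
Proof. by rewrite mxdotE !fnormE norm_sum_mul_le. Qed.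

Lemma fnormD A B : fnorm (A + B) <= fnorm A + fnorm B.
Proof.
rewrite !fnormE (eq_bigr (fun q => (A q.1 q.2 + B q.1 q.2) ^+ 2)).
  exact: (sqrt_sum_sqrD (fun q => A q.1 q.2)).
by move=> q _; rewrite mxE.
Qed.

Lemma fnormZ (c : R) A : fnorm (c *: A) = `|c| * fnorm A.
Proof.
rewrite !fnormE (eq_bigr (fun q => c ^+ 2 * A q.1 q.2 ^+ 2)).
  by rewrite -mulr_sumr sqrtrM ?sqr_ge0 // sqrtr_sqr.
by move=> q _; rewrite mxE exprMn.
Qed.

Lemma fnorm0 : fnorm (0 : 'M[R]_(m, k)) = 0.
Proof. by rewrite -(scale0r 0) fnormZ normr0 mul0r. Qed.

Lemma fnormN A : fnorm (- A) = fnorm A.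
Proof. by rewrite -scaleN1r fnormZ normrN normr1 mul1r. Qed.

Lemma fnorm_gt0 A : A != 0 -> 0 < fnorm A.
Proof.
apply: contraNT; rewrite -leNgt => A0; apply/eqP/matrixP => i j; rewrite mxE.
have : \sum_(q : 'I_m * 'I_k) A q.1 q.2 ^+ 2 = 0.
  apply/eqP; rewrite eq_le (sum_sqr_ge0 (fun q => A q.1 q.2)) andbT.
  by rewrite -sqrtr_eq0 -fnormE eq_le A0 fnorm_ge0.
move/psumr_eq0P => /(_ (fun q _ => sqr_ge0 _) (i, j) isT)/eqP.
by rewrite sqrf_eq0 => /eqP.
Qed.

Lemma mxdotBr A B C : mxdot C (A - B) = mxdot C A - mxdot C B.
Proof. by rewrite !mxdotE -sumrB; apply: eq_bigr => q _; rewrite !mxE; ring. Qed.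

Lemma fnorm_le_mxnorm A : fnorm A <= Num.sqrt (m * k)%:R * `|A|.
Proof.
rewrite fnormE -[`|A|]normr_id -sqrtr_sqr -sqrtrM // ler_wsqrtr //.
have -> : (m * k)%:R * `|A| ^+ 2 = \sum_(q : 'I_m * 'I_k) `|A| ^+ 2.
  by rewrite sumr_const card_prod !card_ord mulr_natl.
apply: ler_sum => q _; rewrite -real_normK ?num_real // lerXn2r ?nnegrE //.
by rewrite [X in _ <= X]/Num.Def.normr /= mx_normrE (le_bigmax _ _ (q.1, q.2)).
Qed.

End FrobeniusNorm.

Lemma fnorm_mulmx {R : realType} {l m k : nat} (A : 'M[R]_(l, m)) (B : 'M[R]_(m, k)) :
  fnorm (A *m B) <= fnorm A * fnorm B.
Proof.
rewrite /fnorm -sqrtrM; last by apply: sumr_ge0 => i _; apply: sum_sqr_ge0.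
apply: ler_wsqrtr; rewrite mulr_suml; apply: ler_sum => i _.
rewrite exchange_big mulr_sumr /=; apply: ler_sum => j _; rewrite mxE.
exact: (sqr_sum_mul_le (fun l => A i l) (fun l => B l j)).
Qed.

Lemma powR_ge1 {R : realType} (x y : R) : 1 <= x -> 0 <= y -> 1 <= x `^ y.
Proof. by move=> x1 y0; rewrite -[leLHS](powRr0 x) ler_powR. Qed.

Lemma ler_powR2r {R : realType} {e x y : R} : 0 <= e -> 0 <= x -> x <= y ->
  x `^ e <= y `^ e.
Proof. by move=> e0 x0 xy; apply: ge0_ler_powR; rewrite ?nnegrE // (le_trans x0). Qed.

Section DerivativeOfB.
Context {R : realType} {N n : nat} (K p : R).
Local Notation V := 'M[R]_(N, n).

Definition sqfnorm : V -> R := \sum_(i < N) \sum_(j < n) (fun xi : V => xi i j) ^+ 2.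

Lemma sqfnormE xi : sqfnorm xi = fnorm xi ^+ 2.
Proof.
rewrite /fnorm sqr_sqrtr; last by apply: sumr_ge0 => i _; apply: sum_sqr_ge0.
rewrite /sqfnorm fct_sumE; apply: eq_bigr => i _; rewrite fct_sumE.
by apply: eq_bigr => j _; rewrite exprfctE.
Qed.

Lemma derive_coord (eta v : V) i j : 'D_v (fun xi : V => xi i j) eta = v i j.
Proof.
have := derive_mx (@derivable_id R V eta v); rewrite derive_id => /matrixP/(_ i j).
by rewrite mxE.
Qed.

Lemma differentiable_sqfnorm (xi : V) : differentiable sqfnorm xi.
Proof.
apply: differentiable_sum => i; apply: differentiable_sum => j.
exact/differentiableX/differentiable_coord.
Qed.

Lemma derive_sqfnorm (eta v : V) : 'D_v sqfnorm eta = 2 * mxdot eta v.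
Proof.
rewrite derive_sum; last by move=> i; apply/diff_derivable/differentiable_sum => j;
  apply/differentiableX/differentiable_coord.
rewrite /mxdot mulr_sumr; apply: eq_bigr => i _.
rewrite derive_sum; last by move=> j; apply/diff_derivable/differentiableX/differentiable_coord.
rewrite mulr_sumr; apply: eq_bigr => j _.
rewrite deriveX; last exact/diff_derivable/differentiable_coord.
by rewrite derive_coord expr1 /GRing.scale /=; ring.
Qed.

Definition bcoef (xi : V) : R := K * fnorm xi `^ (p - 2).

Lemma bcoefE : bcoef = K *: ((@powR R ^~ ((p - 2) / 2)) \o sqfnorm).
Proof.
apply/funext => xi; rewrite /bcoef scalrfctE /= sqfnormE.
by rewrite -powR_mulrn ?fnorm_ge0 // -powRrM; congr (_ * _ `^ _); field.
Qed.

Lemma differentiable_bcoef (eta : V) : eta != 0 -> differentiable bcoef eta.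
Proof.
move=> eta0; rewrite bcoefE; apply/differentiableZ/differentiable_comp.
  exact: differentiable_sqfnorm.
apply/derivable1_diffP/derivable_powR.
by rewrite in_itv /= andbT sqfnormE exprn_gt0 ?fnorm_gt0.
Qed.

Lemma derive_bcoef (eta v : V) : eta != 0 ->
  'D_v bcoef eta = K * (p - 2) * fnorm eta `^ (p - 4) * mxdot eta v.
Proof.
move=> eta0; have Q0 : 0 < sqfnorm eta by rewrite sqfnormE exprn_gt0 ?fnorm_gt0.
have dpow : derivable (@powR R ^~ ((p - 2) / 2)) (sqfnorm eta) 1.
  by apply: derivable_powR; rewrite in_itv /= Q0.
have dQ : 'd sqfnorm eta v = 2 * mxdot eta v.
  by rewrite -deriveE ?derive_sqfnorm //; exact: differentiable_sqfnorm.
have dsq := differentiable_sqfnorm eta; have /derivable1_diffP dpow' := dpow.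
rewrite deriveE; last exact: differentiable_bcoef.
rewrite bcoefE diffZ; last exact: differentiable_comp.
rewrite /= diff_comp // /= diff1E // powR_derive1; last by rewrite in_itv /= Q0.
rewrite dQ sqfnormE -powR_mulrn ?fnorm_ge0 // -powRrM /GRing.scale /=.
have -> : 2%:R * ((p - 2) / 2 - 1) = p - 4 by field.
by field.
Qed.

(* [bmap] written entrywise, so that the product rule for real functions applies. *)
Lemma bmap_entrywise : bmap K p =
  \sum_(i < N) \sum_(j < n) (fun xi : V => (bcoef xi * xi i j) *: delta_mx i j).
Proof.
apply/funext => xi; rewrite /bmap -/(bcoef xi) fct_sumE.
rewrite [X in _ *: X = _](matrix_sum_delta xi) scaler_sumr; apply: eq_bigr => i _.
by rewrite fct_sumE scaler_sumr; apply: eq_bigr => j _; rewrite scalerA.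
Qed.

Lemma differentiable_bmap (eta : V) : eta != 0 -> differentiable (bmap K p) eta.
Proof.
move=> eta0; rewrite bmap_entrywise.
apply: differentiable_sum => i; apply: differentiable_sum => j.
apply/differentiableZl/differentiableM; first exact: differentiable_bcoef.
exact: differentiable_coord.
Qed.

Lemma diff_bmapE (eta v : V) : eta != 0 ->
  'd (bmap K p) eta v = bcoef eta *: v + 'D_v bcoef eta *: eta.
Proof.
move=> eta0; rewrite -deriveE; last exact: differentiable_bmap.
rewrite derive_mx; last exact/diff_derivable/differentiable_bmap.
apply/matrixP => i j; rewrite !mxE.
have -> : (fun xi : V => bmap K p xi i j) = bcoef * (fun xi : V => xi i j).
  by apply/funext => xi; rewrite /bmap mxE.
rewrite deriveM; last 2 first.
- exact/diff_derivable/differentiable_bcoef.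
- exact/diff_derivable/differentiable_coord.
by rewrite derive_coord [eta i j *: _]mulrC.
Qed.

Lemma norm_diff_bmap_le (eta v : V) : 0 <= K -> 2 <= p -> eta != 0 ->
  fnorm ('d (bmap K p) eta v) <= K * (p - 1) * fnorm eta `^ (p - 2) * fnorm v.
Proof.
move=> K0 p2 eta0; have e0 : 0 < fnorm eta by rewrite fnorm_gt0.
rewrite diff_bmapE // derive_bcoef //; apply: le_trans (fnormD _ _) _.
rewrite !fnormZ /bcoef.
set e := fnorm eta; have epow : e `^ (p - 4) * e ^+ 2 = e `^ (p - 2).
  rewrite -powR_mulrn ?fnorm_ge0 // -powRD; last by rewrite (gt_eqF e0) implybT.
  by congr (_ `^ _); ring.
have c0 : 0 <= K * (p - 2) * e `^ (p - 4) by rewrite !mulr_ge0 ?powR_ge0 ?subr_ge0.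
rewrite ger0_norm ?mulr_ge0 ?powR_ge0 // normrM (ger0_norm c0).
apply: le_trans (lerD (lexx _) (ler_wpM2r (ltW e0) (ler_wpM2l c0 (mxdot_le _ _)))) _.
by rewrite -epow -/e; lra.
Qed.

End DerivativeOfB.

Lemma fnorm_le_continuous {R : realType} {m k m' k' : nat}
    {f : 'M[R]_(m, k) -> 'M[R]_(m', k')} {x : 'M[R]_(m, k)} (u : 'M[R]_(m, k)) {B : R} :
  {for x, continuous f} ->
  (forall t, 0 < t <= 1 -> fnorm (f (x + t *: u)) <= B) -> fnorm (f x) <= B.
Proof.
move=> fc fB; apply/ler_addgt0Pr => e e0.
pose M : R := Num.sqrt (m' * k')%:R; have M0 : 0 <= M := sqrtr_ge0 _.
have e'0 : 0 < e / (M + 1) by rewrite divr_gt0 // ltr_wpDl.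
have [d /= d0 fxy] := (nbhs_normP _ _).1 ((cvgrPdist_lt _ _).1 fc _ e'0).
set t := Order.min 1 (d / (`|u| + 1)).
have t0 : 0 < t by rewrite lt_min ltr01 divr_gt0 // ltr_wpDl.
have t1 : t <= 1 by rewrite ge_min lexx.
have td : t <= d / (`|u| + 1) by rewrite ge_min lexx orbT.
have xy : `|f x - f (x + t *: u)| < e / (M + 1).
  apply: fxy; rewrite /= opprD addNKr normrN normrZ gtr0_norm //.
  apply: le_lt_trans (ler_wpM2r (normr_ge0 u) td) _.
  rewrite mulrAC ltr_pdivrMr ?ltr_wpDl // ltr_pM2l //; lra.
have -> : f x = f (x + t *: u) + (f x - f (x + t *: u)) by rewrite addrC subrK.
apply: le_trans (fnormD _ _) (lerD (fB t _) _); first by rewrite t0.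
apply: le_trans (fnorm_le_mxnorm _) _.
apply: le_trans (ler_wpM2l M0 (ltW xy)) _.
by rewrite mulrA ler_pdivrMr ?ltr_wpDl //; nra.
Qed.

Section GrowthOfDa.
Context {R : realType} {N n : nat} {a : 'M[R]_(N, n) -> 'M[R]_(N, n)}.
Context {omega : R -> R} {K p W : R}.
Local Notation V := 'M[R]_(N, n).
Hypotheses (K0 : 0 <= K) (p2 : 2 <= p).
Hypothesis Da_cont : forall v, continuous (fun xi => ('d a xi : V -> V) v).
Hypothesis omega_bounded : forall s, 0 <= s -> 0 <= omega s <= W.
Hypothesis Da_close_to_Db : forall xi v,
  fnorm (('d a xi : V -> V) v - ('d (bmap K p) xi : V -> V) v)
  <= omega (fnorm xi) * (1 + fnorm xi) `^ (p - 2) * fnorm v.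

Lemma norm_diff_le_nonzero (eta v : V) : eta != 0 ->
  fnorm (('d a eta : V -> V) v) <= (K * (p - 1) + W) * (1 + fnorm eta) `^ (p - 2) * fnorm v.
Proof.
move=> eta0; have e0 := fnorm_ge0 eta; have v0 := fnorm_ge0 v.
have /andP[om0 omW] := omega_bounded _ e0.
have pw : fnorm eta `^ (p - 2) <= (1 + fnorm eta) `^ (p - 2).
  by apply: ler_powR2r; rewrite ?subr_ge0 ?lerDr.
rewrite -[_ v](subrK ('d (bmap K p) eta v)) 2!mulrDl [X in _ <= X]addrC.
apply: le_trans (fnormD _ _) (lerD _ _).
  apply: le_trans (Da_close_to_Db _ _) _.
  by rewrite ler_wpM2r // ler_wpM2r ?powR_ge0.
apply: le_trans (norm_diff_bmap_le _ _ _ v K0 p2 eta0) _.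
by rewrite ler_wpM2r // ler_wpM2l // mulr_ge0 //; move: p2; lra.
Qed.

Lemma norm_diff_le (eta v : V) :
  fnorm (('d a eta : V -> V) v)
  <= (K * (p - 1) + W) * 2 `^ (p - 2) * (1 + fnorm eta) `^ (p - 2) * fnorm v.
Proof.
have W0 : 0 <= W by have /andP[/le_trans] := omega_bounded _ (lexx 0); apply.
have C0 : 0 <= K * (p - 1) + W by rewrite addr_ge0 // mulr_ge0 //; move: p2; lra.
have two_pow : 1 <= 2 `^ (p - 2) :> R by rewrite powR_ge1 ?ler1n ?subr_ge0.
have [eta0|eta0] := eqVneq eta 0; last first.
  apply: le_trans (norm_diff_le_nonzero _ v eta0) _.
  by rewrite ler_wpM2r ?fnorm_ge0 // ler_wpM2r ?powR_ge0 // ler_peMr.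
have [->|v0] := eqVneq v 0.
  by rewrite linear0 fnorm0 !mulr_ge0 ?fnorm_ge0 ?powR_ge0.
(* At the origin, approach along the unit vector u in the direction of v. *)
have fv0 : 0 < fnorm v by rewrite fnorm_gt0.
set u := (fnorm v)^-1 *: v.
have u1 : fnorm u = 1 by rewrite fnormZ ger0_norm ?invr_ge0 ?fnorm_ge0 // mulVf ?gt_eqF.
rewrite eta0 fnorm0 addr0 powR1 mulr1.
apply: (fnorm_le_continuous u (Da_cont v 0)) => t /andP[t0 t1].
have tu0 : 0 + t *: u != 0.
  rewrite add0r scaler_eq0 negb_or gt_eqF //=.
  by apply: contra_eq_neq u1 => ->; rewrite fnorm0 eq_sym oner_neq0.
apply: le_trans (norm_diff_le_nonzero _ v tu0) _.
rewrite add0r fnormZ u1 mulr1 (gtr0_norm t0) ler_wpM2r ?fnorm_ge0 // ler_wpM2l //.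
by apply: ler_powR2r; move: p2; lra.
Qed.

End GrowthOfDa.

Section MeanValue.
Context {R : realType} {N n : nat}.
Local Notation V := 'M[R]_(N, n).
Context {a : V -> V}.
Hypothesis a_diff : forall xi, differentiable a xi.

Let line_quotientE (e0 w : V) (t : R) :
  (fun h : R => h^-1 *: (((fun s : R => a (e0 + s *: w)) \o shift t) (h *: 1)
       - a (e0 + t *: w))) =
  (fun h : R => h^-1 *: ((a \o shift (e0 + t *: w)) (h *: w) - a (e0 + t *: w))).
Proof.
by apply/funext => h /=; rewrite [_%:A]mulr1 scalerDl addrCA.
Qed.

Lemma derivable_line (e0 w : V) (t : R) : derivable (fun s : R => a (e0 + s *: w)) t 1.
Proof. by rewrite /derivable line_quotientE; apply: diff_derivable. Qed.

Lemma derive_line (e0 w : V) (t : R) :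
  'D_1 (fun s : R => a (e0 + s *: w)) t = 'd a (e0 + t *: w) w.
Proof. by rewrite /derive line_quotientE -deriveE. Qed.

Lemma is_derive_mxdot_line (e0 w M : V) (t : R) :
  is_derive t 1 (fun s : R => mxdot (a (e0 + s *: w)) M)
    (mxdot ('d a (e0 + t *: w) w) M).
Proof.
set g := fun s : R => a (e0 + s *: w).
have gij i j : derivable (fun s => g s i j) t 1.
  by move: (derivable_line e0 w t) => /derivable_mxP; apply.
have -> : (fun s => mxdot (g s) M) = \sum_(i < N) \sum_(j < n) M i j *: (fun s => g s i j).
  apply/funext => s; rewrite /mxdot fct_sumE; apply: eq_bigr => i _.
  by rewrite fct_sumE; apply: eq_bigr => j _; rewrite /GRing.scale /= mulrC.
have -> : mxdot ('d a (e0 + t *: w) w) M =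
    \sum_(i < N) \sum_(j < n) M i j *: 'D_1 (fun s => g s i j) t.
  rewrite -derive_line derive_mx; last exact: derivable_line.
  by apply: eq_bigr => i _; apply: eq_bigr => j _; rewrite mxE /GRing.scale /= mulrC.
apply: is_derive_sum => i; apply: is_derive_sum => j.
by apply: is_deriveZ; apply: derivableP.
Qed.

Context {C q : R}.
Hypotheses (C0 : 0 <= C) (q0 : 0 <= q).
Hypothesis Da_le : forall eta v, fnorm ('d a eta v) <= C * (1 + fnorm eta) `^ q * fnorm v.

Lemma mxdot_increment_le (e0 w M : V) : `|mxdot (a (e0 + w)) M - mxdot (a e0) M| <=
  C * (1 + fnorm e0 + fnorm w) `^ q * fnorm w * fnorm M.
Proof.
set phi := fun s : R => mxdot (a (e0 + s *: w)) M.
have phi_cont : {within `[0, 1], continuous phi}.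
  apply: derivable_within_continuous => s _.
  by have [] := is_derive_mxdot_line e0 w M s.
have [c /[!in_itv] /= /andP[c0 c1]] :=
  MVT_segment ler01 (fun s _ => is_derive_mxdot_line e0 w M s) phi_cont.
rewrite /phi scale0r scale1r addr0 => ->.
rewrite subr0 mulr1; apply: le_trans (mxdot_le _ _) _.
apply: ler_wpM2r (fnorm_ge0 _) _ _ _; apply: le_trans (Da_le _ _) _.
apply: ler_wpM2r (fnorm_ge0 _) _ _ _; apply: ler_wpM2l C0 _ _ _.
have := fnormD e0 (c *: w); rewrite fnormZ (ger0_norm c0) => eD.
have := fnorm_ge0 (e0 + c *: w); have := fnorm_ge0 e0; have := fnorm_ge0 w => w0 e00 ec0.
by apply: ler_powR2r => //; nra.
Qed.

Lemma mxdot_perturb_le (A0 : R) (e0 e1 M0 M1 : V) : fnorm (a 0) <= A0 ->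
  `|mxdot (a e1) M1 - mxdot (a e0) M0| <=
  C * (1 + fnorm e0 + fnorm (e1 - e0)) `^ q * fnorm (e1 - e0) * fnorm M1
  + (A0 + C * (1 + fnorm e0) `^ q * fnorm e0) * fnorm (M1 - M0).
Proof.
move=> a0_le; set D := M1 - M0.
have -> : mxdot (a e1) M1 - mxdot (a e0) M0 =
    (mxdot (a (e0 + (e1 - e0))) M1 - mxdot (a e0) M1)
    + ((mxdot (a (0 + e0)) D - mxdot (a 0) D) + mxdot (a 0) D).
  by rewrite (addrC e0) subrK add0r subrK /D mxdotBr; ring.
apply: le_trans (ler_normD _ _) (lerD (mxdot_increment_le _ _ _) _).
rewrite mulrDl [X in _ <= X]addrC; apply: le_trans (ler_normD _ _) (lerD _ _).
  by have := mxdot_increment_le 0 e0 D; rewrite fnorm0 addr0.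
exact: le_trans (mxdot_le _ _) (ler_wpM2r (fnorm_ge0 _) a0_le).
Qed.

End MeanValue.

Section HalfBall.
Context {R : realType} {n : nat}.
Implicit Types (x xo y : 'rV[R]_n) (rho : R).

Lemma lastcZ (c : R) x : lastc (c *: x) = c * lastc x.
Proof. by rewrite /lastc mulr_sumr; apply: eq_bigr => i _; rewrite mxE. Qed.

Lemma lastc0 : lastc (0 : 'rV[R]_n) = 0.
Proof. by rewrite -(scale0r 0) lastcZ mul0r. Qed.

Lemma halfball_cl_other_point {xo x rho} : 0 < rho -> 0 <= lastc xo ->
  halfball xo rho x -> exists2 y, halfball_cl xo rho y & y != xo.
Proof.
move=> rho0 xo0 [x_in x_pos]; have [xo_eq0|xo_ne0] := eqVneq xo 0.
  exists x; first by split; apply: ltW.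
  by rewrite xo_eq0; apply: contraTneq x_pos => ->; rewrite lastc0 ltxx.
(* Otherwise shrink xo towards the origin, which keeps the last coordinate nonnegative. *)
have e0 : 0 < fnorm xo by rewrite fnorm_gt0.
set tau := rho / (fnorm xo + rho).
have tau0 : 0 < tau by rewrite divr_gt0 // ltr_wpDl ?fnorm_ge0.
have tau1 : tau <= 1 by rewrite ler_pdivrMr ?ltr_wpDl ?fnorm_ge0 // mul1r lerDr fnorm_ge0.
have yxo : (1 - tau) *: xo - xo = - (tau *: xo) by rewrite scalerBl scale1r addrAC subrr add0r.
exists ((1 - tau) *: xo); last by rewrite -subr_eq0 yxo oppr_eq0 scaler_eq0 negb_or gt_eqF.
split; last by rewrite lastcZ mulr_ge0 // subr_ge0.
rewrite yxo fnormN fnormZ gtr0_norm // mulrAC ler_pdivrMr; last by rewrite ltr_wpDl ?fnorm_ge0.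
by rewrite ler_pM2l // lerDl ltW.
Qed.

Lemma holder_le_bounds {m k : nat} {beta rho P Q : R} {xo x} {v : 'rV[R]_n -> 'M[R]_(m, k)} :
  0 <= beta -> 0 < rho -> 0 <= lastc xo -> P <= Q ->
  holder_le beta (halfball_cl xo rho) v P -> halfball xo rho x ->
  [/\ fnorm (v x) <= Q, fnorm (v xo) <= Q & fnorm (v x - v xo) <= Q * rho `^ beta].
Proof.
move=> beta0 rho0 xo0 PQ [M0 [M1 [MP [v_le v_holder]]]] x_in.
have x_cl : halfball_cl xo rho x by case: x_in => ? ?; split => //; exact: ltW.
have xo_cl : halfball_cl xo rho xo by split; rewrite // subrr fnorm0 ltW.
(* A second point of the closed half ball forces the Hölder constant to be nonnegative. *)
have M1_ge0 : 0 <= M1.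
  have [y y_cl yxo] := halfball_cl_other_point rho0 xo0 x_in.
  have d0 : 0 < fnorm (y - xo) `^ beta by rewrite powR_gt0 // fnorm_gt0 // subr_eq0.
  by rewrite -(pmulr_lge0 _ d0); apply: le_trans (v_holder _ _ y_cl xo_cl yxo); exact: fnorm_ge0.
have M0_ge0 : 0 <= M0 := le_trans (fnorm_ge0 _) (v_le _ xo_cl).
have M0Q : M0 <= Q by apply: le_trans PQ; apply: le_trans MP; rewrite lerDl.
have M1Q : M1 <= Q by apply: le_trans PQ; apply: le_trans MP; rewrite lerDr.
split; [exact: le_trans (v_le _ x_cl) M0Q | exact: le_trans (v_le _ xo_cl) M0Q |].
have [->|xxo] := eqVneq x xo.
  by rewrite subrr fnorm0 mulr_ge0 ?powR_ge0 // (le_trans M0_ge0).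
apply: le_trans (v_holder _ _ x_cl xo_cl xxo) (ler_pM M1_ge0 (powR_ge0 _ _) M1Q _).
by case: x_in => x_in _; apply: ler_powR2r; rewrite ?fnorm_ge0 // ltW.
Qed.

End HalfBall.

Lemma powR_split_le {R : realType} (p s d r : R) :
  2 <= p -> 0 <= s -> 0 <= d -> 0 <= r -> r <= 1 ->
  (1 + s + d) `^ (p - 2) * (d + (1 + s) * r) <=
  2 * 3 `^ (p - 2) * ((1 + s ^+ 2 + d ^+ 2) `^ ((p - 2) / 2) * d + r * (1 + s) `^ (p - 1)).
Proof.
move=> p2 s0 d0 r0 r1.
set U := 1 + s + d; set S := 1 + s.
set X := _ * d; set Y := r * _; set t := 3 `^ (p - 2).
have Udef : U = 1 + s + d by []; have Sdef : S = 1 + s by [].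
clearbody U S; have S0 : 0 <= S by lra.
have q0 : 0 <= p - 2 by lra.
have t0 : 0 <= t := powR_ge0 _ _.
have X0 : 0 <= X by rewrite mulr_ge0 ?powR_ge0.
have Y0 : 0 <= Y by rewrite mulr_ge0 ?powR_ge0.
have U0 : 0 <= U `^ (p - 2) := powR_ge0 _ _.
(* The factor 3 comes from (1 + s + d)^2 <= 3 (1 + s^2 + d^2). *)
have UX : U `^ (p - 2) * d <= t * X.
  rewrite /X mulrA ler_wpM2r //.
  have -> : U `^ (p - 2) = (U ^+ 2) `^ ((p - 2) / 2).
    by rewrite -powR_mulrn -?powRrM; [congr (_ `^ _); field | lra].
  apply: (@le_trans _ _ ((3 * (1 + s ^+ 2 + d ^+ 2)) `^ ((p - 2) / 2))).
    apply: ler_powR2r; [lra | exact: sqr_ge0 |].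
    by have := sqr_ge0 (1 - s); have := sqr_ge0 (1 - d); have := sqr_ge0 (s - d); nra.
  rewrite powRM; [|lra|nra]; apply: ler_wpM2r; first exact: powR_ge0.
  by apply: ler_powR; lra.
have [dS|Sd] := lerP d S; last first.
  have : U `^ (p - 2) * (S * r) <= U `^ (p - 2) * d by rewrite ler_wpM2l //; nra.
  by rewrite mulrDr; nra.
have SY : S `^ (p - 2) * (S * r) = Y.
  rewrite mulrA /Y mulrC; congr (_ * _).
  have -> : p - 2 = p - 1 - 1 by ring.
  by rewrite mulrC mulr_powRB1; [| lra | lra].
have UY : U `^ (p - 2) * (S * r) <= t * Y.
  rewrite -SY [X in _ <= X]mulrA ler_wpM2r ?mulr_ge0 //.
  by rewrite /t -powRM; [apply: ler_powR2r; lra | lra | lra].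
by rewrite mulrDr; nra.
Qed.

Lemma perturbation_estimate_le (R : realType) (p Q C A0 s d r z E0 E1 m1 Dn : R) :
  2 <= p -> 1 <= Q -> 0 <= C <= Q -> 0 <= A0 <= Q ->
  0 <= s -> 0 <= d -> 0 <= r <= 1 -> 0 <= z ->
  0 <= E0 <= Q ^+ 2 * (1 + s) -> 0 <= E1 <= 2 * Q ^+ 2 * (d + (1 + s) * r) ->
  0 <= m1 <= Q * z -> 0 <= Dn <= Q * r * z ->
  C * (1 + E0 + E1) `^ (p - 2) * E1 * m1 + (A0 + C * (1 + E0) `^ (p - 2) * E0) * Dn
  <= 8 * Q ^+ 4 * (4 * Q ^+ 2) `^ (p - 2) * 3 `^ (p - 2) *
     ((1 + s ^+ 2 + d ^+ 2) `^ ((p - 2) / 2) * d + r * (1 + s) `^ (p - 1)) * z.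
Proof.
move=> p2 Q1 /andP[C0 CQ] /andP[A00 A0Q] s0 d0 /andP[r0 r1] z0 /andP[E00 E0Q] /andP[E10 E1Q]
  /andP[m10 m1Q] /andP[Dn0 DnQ].
have key := powR_split_le p s d r p2 s0 d0 r0 r1.
set V := (1 + s + d) `^ (p - 2) in key *; set D := d + (1 + s) * r in E1Q key *.
set L := (4 * Q ^+ 2) `^ (p - 2).
have Q0 : 0 <= Q := le_trans ler01 Q1.
have QQ1 : 1 <= Q ^+ 2 by rewrite expr_ge1.
have LV1 : 1 <= L * V.
  by rewrite mulr_ege1 // powR_ge1; nra.
have pow_le t : 0 <= t -> t <= 4 * Q ^+ 2 * (1 + s + d) -> t `^ (p - 2) <= L * V.
  move=> t0 tle; rewrite -powRM ?mulr_ge0 ?sqr_ge0 ?addr_ge0 //.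
  by apply: ler_powR2r => //; lra.
have E1le : E1 <= 2 * Q ^+ 2 * (1 + s + d).
  apply: le_trans E1Q _; rewrite ler_wpM2l ?mulr_ge0 ?sqr_ge0 // /D; nra.
have P1 : (1 + E0 + E1) `^ (p - 2) <= L * V by apply: pow_le; nra.
have P2 : (1 + E0) `^ (p - 2) <= L * V by apply: pow_le; nra.
have T1 : C * (1 + E0 + E1) `^ (p - 2) * E1 * m1 <= 2 * Q ^+ 4 * L * (V * D) * z.
  apply: le_trans (_ : Q * (L * V) * (2 * Q ^+ 2 * D) * (Q * z) <= _); last lra.
  by rewrite !ler_pM ?mulr_ge0 ?powR_ge0.
have T2 : (A0 + C * (1 + E0) `^ (p - 2) * E0) * Dn <= 2 * Q ^+ 4 * L * (V * D) * z.
  apply: le_trans (_ : (Q + Q * (L * V) * (Q ^+ 2 * (1 + s))) * (Q * r * z) <= _).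
    apply: ler_pM; rewrite ?addr_ge0 ?mulr_ge0 ?powR_ge0 //.
    by rewrite lerD // !ler_pM ?mulr_ge0 ?powR_ge0.
  have QS : Q <= Q * (L * V) * (Q ^+ 2 * (1 + s)).
    rewrite -[leLHS]mulr1 -mulrA ler_wpM2l // mulr_ege1 // mulr_ege1 //; lra.
  apply: le_trans (_ : 2 * Q ^+ 4 * L * (V * ((1 + s) * r)) * z <= _).
    apply: le_trans (ler_wpM2r _ (lerD QS (lexx _))) _; first by rewrite !mulr_ge0.
    lra.
  rewrite ler_wpM2r // ler_wpM2l ?mulr_ge0 ?exprn_ge0 ?powR_ge0 //.
  by rewrite ler_wpM2l ?powR_ge0 // /D lerDr.
apply: le_trans (lerD T1 T2) _.
apply: le_trans (_ : 4 * Q ^+ 4 * L * (V * D) * z <= _); first lra.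
have -> : 8 * Q ^+ 4 * L * 3 `^ (p - 2) = 4 * Q ^+ 4 * L * (2 * 3 `^ (p - 2)) by ring.
by rewrite ler_wpM2r // -[X in _ <= X]mulrA ler_wpM2l ?mulr_ge0 ?exprn_ge0 ?powR_ge0.
Qed.

Lemma fnorm_shift_mulmx_le {R : realType} {N n : nat} {Q r : R}
    (xi xio : 'M[R]_(N, n)) {Gx Gxo : 'M[R]_(N, n)} {Px Pxo : 'M[R]_n} :
  1 <= Q -> 0 <= r -> fnorm Gxo <= Q -> fnorm Px <= Q -> fnorm Pxo <= Q ->
  fnorm (Gx - Gxo) <= Q * r -> fnorm (Px - Pxo) <= Q * r ->
  fnorm ((xio + Gxo) *m Pxo) <= Q ^+ 2 * (1 + fnorm xio) /\
  fnorm ((xi + Gx) *m Px - (xio + Gxo) *m Pxo)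
    <= 2 * Q ^+ 2 * (fnorm (xi - xio) + (1 + fnorm xio) * r).
Proof.
move=> Q1 r0 Gxo_le Px_le Pxo_le Gd Pd.
have Q0 : 0 <= Q := le_trans ler01 Q1.
have QQ : Q <= Q ^+ 2 by nra.
have s0 := fnorm_ge0 xio; have d0 := fnorm_ge0 (xi - xio).
have e0_le : fnorm (xio + Gxo) <= fnorm xio + Q by apply: le_trans (fnormD _ _) _; rewrite lerD2l.
split.
  apply: le_trans (fnorm_mulmx _ _) _.
  apply: le_trans (ler_pM (fnorm_ge0 _) (fnorm_ge0 _) e0_le Pxo_le) _; nra.
have -> : (xi + Gx) *m Px - (xio + Gxo) *m Pxo
    = (xi + Gx - (xio + Gxo)) *m Px + (xio + Gxo) *m (Px - Pxo).
  by rewrite mulmxBl mulmxBr addrA subrK.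
have dG : fnorm (xi + Gx - (xio + Gxo)) <= fnorm (xi - xio) + Q * r.
  by rewrite opprD addrACA; apply: le_trans (fnormD _ _) _; rewrite lerD2l.
apply: le_trans (fnormD _ _) _; apply: le_trans (lerD (fnorm_mulmx _ _) (fnorm_mulmx _ _)) _.
apply: le_trans (lerD (ler_pM (fnorm_ge0 _) (fnorm_ge0 _) dG Px_le)
  (ler_pM (fnorm_ge0 _) (fnorm_ge0 _) e0_le Pd)) _.
have := mulr_ge0 s0 r0; have := mulr_ge0 (le_trans Q0 QQ) d0; nra.
Qed.

Theorem lemma3p15 (R : realType) (N n : nat) (p K A0 W P Gm : R) :
  2 <= p -> 0 < K ->
  exists c : R, 0 < c /\
  forall (a : 'M[R]_(N, n) -> 'M[R]_(N, n)) (omega : R -> R)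
         (beta rho : R) (xo : 'rV[R]_n)
         (Psi : 'rV[R]_n -> 'M[R]_n) (G : 'rV[R]_n -> 'M[R]_(N, n)),
    (forall xi, differentiable a xi) ->
    (forall zeta, continuous (fun xi => ('d a xi : 'M[R]_(N, n) -> 'M[R]_(N, n)) zeta)) ->
    fnorm (a 0) <= A0 ->
    (forall s, 0 <= s -> 0 <= omega s <= W) ->
    omega s @[s --> +oo] --> 0 ->
    (forall xi zeta,
       fnorm (('d a xi : 'M[R]_(N, n) -> 'M[R]_(N, n)) zeta
              - ('d (bmap K p) xi : 'M[R]_(N, n) -> 'M[R]_(N, n)) zeta)
       <= omega (fnorm xi) * (1 + fnorm xi) `^ (p - 2) * fnorm zeta) ->
    0 < beta < 1 -> 0 < rho <= 1 ->
    0 <= lastc xo ->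
    holder_le beta (halfball_cl xo rho) Psi P ->
    holder_le beta (halfball_cl xo rho) G Gm ->
    forall (x : 'rV[R]_n) (xi xio zeta : 'M[R]_(N, n)),
      halfball xo rho x ->
      `| mxdot (a ((xi + G x) *m Psi x)) (zeta *m Psi x)
         - mxdot (a ((xio + G xo) *m Psi xo)) (zeta *m Psi xo) |
      <= c * ((1 + fnorm xio ^+ 2 + fnorm (xi - xio) ^+ 2) `^ ((p - 2) / 2)
                * fnorm (xi - xio)
              + rho `^ beta * (1 + fnorm xio) `^ (p - 1)) * fnorm zeta.
Proof.
move=> p2 K0; set C := (K * (p - 1) + `|W|) * 2 `^ (p - 2).
have C0 : 0 <= C by rewrite mulr_ge0 ?powR_ge0 // addr_ge0 // mulr_ge0; lra.
set Q := 1 + `|P| + `|Gm| + `|A0| + C.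
have [Q1 PQ GQ AQ CQ] : [/\ 1 <= Q, P <= Q, Gm <= Q, A0 <= Q & C <= Q].
  by split; rewrite /Q; move: (ler_norm P) (ler_norm Gm) (ler_norm A0)
    (normr_ge0 P) (normr_ge0 Gm) (normr_ge0 A0); lra.
exists (8 * Q ^+ 4 * (4 * Q ^+ 2) `^ (p - 2) * 3 `^ (p - 2)).
have Q0 : 0 < Q by lra.
split; first by rewrite !mulr_gt0 ?exprn_gt0 ?powR_gt0 ?mulr_gt0 ?exprn_gt0.
move=> a omega beta rho xo Psi G a_diff Da_cont a0_le omega_bd _ Da_Db
  /andP[beta0 _] /andP[rho0 rho1] xo0 Psi_holder G_holder x xi xio zeta x_in.
have W0 : 0 <= W by have /andP[/le_trans] := omega_bd _ (lexx 0); apply.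
have Da_le := norm_diff_le (ltW K0) p2 Da_cont omega_bd Da_Db.
rewrite -(ger0_norm W0) -/C in Da_le.
have [Psi_x Psi_xo Psi_d] := holder_le_bounds (ltW beta0) rho0 xo0 PQ Psi_holder x_in.
have [_ G_xo G_d] := holder_le_bounds (ltW beta0) rho0 xo0 GQ G_holder x_in.
have r0 : 0 <= rho `^ beta := powR_ge0 _ _.
have r1 : rho `^ beta <= 1 by have := ler_powR2r (ltW beta0) (ltW rho0) rho1; rewrite powR1.
have [e0_le e1_le] := fnorm_shift_mulmx_le xi xio Q1 r0 G_xo Psi_x Psi_xo G_d Psi_d.
have q0 : 0 <= p - 2 by lra.
apply: le_trans (mxdot_perturb_le a_diff C0 q0 Da_le _ _ _ _ _ a0_le) _.
have A00 : 0 <= A0 := le_trans (fnorm_ge0 _) a0_le.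
rewrite -mulmxBr; apply: perturbation_estimate_le; rewrite ?fnorm_ge0 ?C0 ?CQ ?A00 ?AQ ?r0 ?r1 //=.
  by apply: le_trans (fnorm_mulmx _ _) _; rewrite [leRHS]mulrC ler_wpM2l ?fnorm_ge0.
by apply: le_trans (fnorm_mulmx _ _) _; rewrite [leRHS]mulrC ler_wpM2l ?fnorm_ge0.
Qed.
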